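(* Let $k\ge0$ and $m\ge0$ be integers and $a,b,c,d,w\in\mathbb{C}$ generic. (i) $${}_5F_4\!\left[\begin{matrix}\tfrac a2,\ \tfrac12+\tfrac a2,\ 1-k+a-b-c,\ 1+a-w,\ -m\\ 1+a-b,\ 1+a-c,\ \tfrac12+\tfrac12(a-w-m),\ 1+\tfrac12(a-w-m)\end{matrix}\,\Big|\,1\right]=\frac{(w)_m}{(w-a)_m}\sum_{n=0}^m\frac{(a)_n(b)_n(c)_n(-m)_n}{n!\,(1+a-b)_n(1+a-c)_n(w)_n}\,Q_k^{(2)}(n;a;b,c).$$ (ii) $${}_6F_5\!\left[\begin{matrix}\tfrac a2,\ \tfrac12+\tfrac a2,\ 1-k+a-b-c,\ k+d,\ 1+a-w,\ -m\\ 1+a-b,\ 1+a-c,\ d,\ \tfrac12+\tfrac12(a-w-m),\ 1+\tfrac12(a-w-m)\end{matrix}\,\Big|\,1\right]=\frac{(w)_m}{(w-a)_m}\sum_{n=0}^m\frac{(a)_n(b)_n(c)_n(-m)_n}{n!\,(1+a-b)_n(1+a-c)_n(w)_n}\,Q_k^{(2)}(n;a;b,c,d).$$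
   Context: $(c)_n$ denotes the Pochhammer symbol, $(c)_0=1$; ${}_pF_q(1)$ is the terminating generalized hypergeometric series at $1$. $Q_k^{(2)}(n;a;b,c)=\sum_{j=0}^k\frac{(-n)_j(n+a)_j(-k)_j}{j!(b)_j(c)_j}$ and $Q_k^{(2)}(n;a;b,c,d)=\sum_{j=0}^k\frac{(-n)_j(n+a)_j(-k)_j(k-1-a+b+c+d)_j}{j!(b)_j(c)_j(d)_j}$. Parameters are generic so no lower parameter is a nonpositive integer. *)

(* The field of complex numbers is rendered as an arbitrary
   numClosedFieldType (MathComp's abstraction of C; algC is an instance). *)
From HB Require Import structures.
From mathcomp Require Import all_boot all_order all_algebra.
Set Implicit Arguments. Unset Strict Implicit. Unset Printing Implicit Defensive.
Import Order.TTheory GRing.Theory Num.Theory.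
Local Open Scope ring_scope.

Definition poch {R : numClosedFieldType} (x : R) (n : nat) : R :=
  \prod_(i < n) (x + i%:R).

(* Terminating generalized hypergeometric series at 1:
   pFq[us; ds | 1] summed over j = 0..N (N is the termination bound,
   i.e. some upper parameter equals -N, so all later terms vanish). *)
Definition hypF1 {R : numClosedFieldType} (us ds : seq R) (N : nat) : R :=
  \sum_(j < N.+1)
    (\prod_(u <- us) poch u j) / ((\prod_(v <- ds) poch v j) * (j`!)%:R).

Definition Q2_3 {R : numClosedFieldType} (k n : nat) (a b c : R) : R :=
  \sum_(j < k.+1)
    poch (- n%:R) j * poch (n%:R + a) j * poch (- k%:R) j
      / ((j`!)%:R * poch b j * poch c j).

Definition Q2_4 {R : numClosedFieldType} (k n : nat) (a b c d : R) : R :=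
  \sum_(j < k.+1)
    poch (- n%:R) j * poch (n%:R + a) j * poch (- k%:R) j
      * poch (k%:R - 1 - a + b + c + d) j
      / ((j`!)%:R * poch b j * poch c j * poch d j).

(* genericity: x is not a nonpositive integer *)
Definition not_nonpos_int {R : numClosedFieldType} (x : R) : Prop :=
  forall j : nat, x != - j%:R.

From HB Require Import structures.
From mathcomp Require Import all_boot all_order all_algebra.
From mathcomp Require Import ring.
Set Implicit Arguments. Unset Strict Implicit. Unset Printing Implicit Defensive.
Import Order.TTheory GRing.Theory Num.Theory.
Local Open Scope ring_scope.

(* Both identities are instances of one transformation valid for an arbitrary
   sequence Y: the left-hand factor (1-k+a-b-c)_j (resp. (1-k+a-b-c)_j (k+d)_j/(d)_j)
   is the binomial convolution of Y_i = (-k)_i (resp. (-k)_i (k-1-a+b+c+d)_i/(d)_i)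
   with (1+a-b-c)_(j-i), by the Pochhammer binomial theorem (resp. Pfaff-Saalschutz).
   On the right, exchanging the sums in Q_k^(2)(n) leaves a balanced 3F2 summed by
   Pfaff-Saalschutz; exchanging the sum over n leaves a 2F1 summed by Chu-Vandermonde,
   and the duplication formula (y)_(2j) = 4^j (y/2)_j (y/2+1/2)_j produces the
   parameters a/2, 1/2+a/2 and the two half-integer-shifted lower parameters. *)

Section OrdinalSums.
Variable V : nmodType.

Lemma exchange_triangle (F : nat -> nat -> V) M :
  \sum_(n < M.+1) \sum_(j < n.+1) F n j
  = \sum_(j < M.+1) \sum_(l < (M - j).+1) F (j + l)%N j.
Proof.
transitivity (\sum_(n < M.+1) \sum_(j < M.+1) (if (j <= n)%N then F n j else 0)).
  apply: eq_bigr => n _; rewrite -big_mkcond /=.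
  by rewrite (big_ord_widen M.+1 (F n)) // ltnS ltnW.
rewrite exchange_big /=; apply: eq_bigr => -[j ltjM] _ /=.
rewrite -big_mkcond /= -(big_geq_mkord j M.+1 xpredT (fun n => F n j)).
rewrite -{1}(add0n j) big_addn big_mkord subSn //.
by apply: eq_bigr => l _; rewrite addnC.
Qed.

Lemma big_ord_widen_eq0 (F : nat -> V) N M :
  (N <= M)%N -> (forall i, (N < i)%N -> F i = 0) ->
  \sum_(i < N.+1) F i = \sum_(i < M.+1) F i.
Proof.
move=> leNM F0; rewrite (big_ord_widen M.+1 F) // big_mkcond /=.
by apply: eq_bigr => i _; case: ltnP => // /F0 ->.
Qed.

Lemma big_ord_eq_support (F : nat -> V) N M :
  (forall i, (N < i)%N -> F i = 0) -> (forall i, (M < i)%N -> F i = 0) ->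
  \sum_(i < N.+1) F i = \sum_(i < M.+1) F i.
Proof.
move=> FN FM; rewrite (big_ord_widen_eq0 (leq_addr M N) FN).
by rewrite (big_ord_widen_eq0 (leq_addl N M) FM).
Qed.

End OrdinalSums.

Section Hypergeometric.
Variable R : numClosedFieldType.
Implicit Types (x y u al be g ep : R) (n N i j l : nat).

Lemma poch0 x : poch x 0 = 1.
Proof. by rewrite /poch big_ord0. Qed.

Lemma pochS x n : poch x n.+1 = poch x n * (x + n%:R).
Proof. by rewrite /poch big_ord_recr. Qed.

Lemma pochD x i j : poch x (i + j) = poch x i * poch (x + i%:R) j.
Proof.
elim: j => [|j IH]; first by rewrite addn0 poch0 mulr1.
by rewrite addnS !pochS IH natrD addrA mulrA.
Qed.

Lemma poch_split x l N : (l <= N)%N ->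
  poch x N = poch x l * poch (x + l%:R) (N - l).
Proof. by move=> lelN; rewrite -pochD subnKC. Qed.

Lemma poch_neq0 x n : not_nonpos_int x -> poch x n != 0.
Proof. by move=> xP; apply/prodf_neq0 => i _; rewrite addr_eq0. Qed.

Lemma poch_neq0_prefix x l N : (l <= N)%N -> poch x N != 0 -> poch x l != 0.
Proof. by move=> /(poch_split x) ->; rewrite mulf_eq0 negb_or => /andP[]. Qed.

Lemma poch_neq0_suffix x l N : (l <= N)%N ->
  poch x N != 0 -> poch (x + l%:R) (N - l) != 0.
Proof. by move=> /(poch_split x) ->; rewrite mulf_eq0 negb_or => /andP[]. Qed.

Lemma natr_fact_neq0 n : (n`!%:R : R) != 0.
Proof. by rewrite pnatr_eq0 -lt0n fact_gt0. Qed.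

Lemma poch_opp_nat_eq0 N j : (N < j)%N -> poch (- N%:R : R) j = 0.
Proof. by move=> ltNj; rewrite -(subnKC ltNj) pochD pochS addrC subrr mulr0 mul0r. Qed.

Lemma poch_opp x n : poch (- x) n = (-1) ^+ n * poch (x - n%:R + 1) n.
Proof.
elim: n => [|n IH]; first by rewrite !poch0 expr0 mulr1.
rewrite pochS IH -add1n pochD pochS poch0.
have -> : x - (1 + n)%:R + 1 + 1%:R = x - n%:R + 1 by rewrite natrD; ring.
rewrite exprS natrD; ring.
Qed.

Lemma poch_reflect x n : poch (1 - x - n%:R) n = (-1) ^+ n * poch x n.
Proof.
rewrite (_ : 1 - x - n%:R = - (x + n%:R - 1)) ?poch_opp; last by ring.
by congr (_ * poch _ _); ring.
Qed.

Lemma poch_natS_fact n l : poch (n.+1%:R : R) l * n`!%:R = (n + l)`!%:R.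
Proof.
elim: l => [|l IH]; first by rewrite poch0 mul1r addn0.
by rewrite pochS mulrAC IH addnS factS natrM -natrD -addSn mulrC.
Qed.

Lemma poch_opp_nat N l : (l <= N)%N ->
  poch (- N%:R : R) l = (-1) ^+ l * 'C(N, l)%:R * l`!%:R.
Proof.
move=> lelN; rewrite poch_opp.
have -> : (N%:R : R) - l%:R + 1 = (N - l).+1%:R by rewrite -natrB // -addn1 natrD.
apply: (mulIf (natr_fact_neq0 (N - l))).
rewrite -[LHS]mulrA poch_natS_fact subnK // -(bin_fact lelN) !natrM; ring.
Qed.

Lemma poch_opp_nat_fact r s :
  poch (- (r + s)%:R : R) r = (-1) ^+ r * (r + s)`!%:R / s`!%:R.
Proof.
rewrite poch_opp (_ : _ - _ + 1 = s.+1%:R); last by rewrite natrD -addn1 natrD; ring.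
by rewrite addnC -(poch_natS_fact s r) mulrA mulfK ?natr_fact_neq0.
Qed.

Lemma poch_opp_natD N r s : (r <= N)%N ->
  poch (- N%:R : R) (r + s) = poch (- N%:R) r * poch (- (N - r)%:R) s.
Proof. by move=> lerN; rewrite pochD natrB //; congr (_ * poch _ _); ring. Qed.

Lemma poch_double y j :
  poch y (j + j) = 4 ^+ j * poch (y / 2) j * poch (2^-1 + y / 2) j.
Proof.
have two_neq0 : (2 : R) != 0 by rewrite pnatr_eq0.
elim: j => [|j IH]; first by rewrite !poch0 expr0 !mulr1.
by rewrite addSn addnS !pochS IH exprS !mulrSr !natrD; field.
Qed.

Lemma poch_addr_binomial x y n :
  poch (x + y) n = \sum_(i < n.+1) 'C(n, i)%:R * poch x i * poch y (n - i).
Proof.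
elim: n => [|n IH]; first by rewrite big_ord1 !poch0 bin0 mulr1 mul1r.
pose F i := 'C(n, i)%:R * poch x i * poch y (n.+1 - i).
have split_term (i : 'I_n.+1) :
    'C(n, i)%:R * poch x i * poch y (n - i) * (x + y + n%:R)
    = 'C(n, i)%:R * poch x i.+1 * poch y (n - i) + F i.
  have leiN : (i <= n)%N by rewrite -ltnS.
  by rewrite /F !pochS subSn // pochS natrB //; ring.
rewrite pochS IH big_distrl /= (eq_bigr _ (fun (i : 'I_n.+1) _ => split_term i)) big_split /=.
rewrite [RHS]big_ord_recl /= bin0 poch0 subn0.
under [in RHS]eq_bigr => i _ do rewrite binS natrD !mulrDl.
rewrite big_split /= addrA addrC; congr (_ + _).
transitivity (\sum_(i < n.+2) F i).
  by rewrite [RHS]big_ord_recr /= [F n.+1]/F bin_small // !mul0r addr0.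
by rewrite big_ord_recl /F bin0 poch0 subn0 !mul1r.
Qed.

Lemma chu_vandermonde_poly N al g :
  \sum_(l < N.+1) poch (- N%:R : R) l * poch al l * poch (g + l%:R) (N - l) / l`!%:R
  = poch (g - al) N.
Proof.
have := poch_addr_binomial al (1 - g - N%:R) N.
rewrite (_ : al + _ = 1 - (g - al) - N%:R) ?poch_reflect; last by ring.
move=> binom; apply: (@mulfI _ ((-1) ^+ N)); first by rewrite signr_eq0.
rewrite binom big_distrr /=; apply: eq_bigr => -[l] /=; rewrite ltnS => lelN _.
rewrite (_ : 1 - g - N%:R = 1 - (g + l%:R) - (N - l)%:R); last by rewrite natrB //; ring.
rewrite poch_opp_nat // poch_reflect -{1}(subnKC lelN) exprD.
transitivity ((-1) ^+ l ^+ 2 * ('C(N, l)%:R * poch al l * ((-1) ^+ (N - l)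
  * poch (g + l%:R) (N - l))) * (l`!%:R / l`!%:R)); first by ring.
by rewrite sqrr_sign divff ?natr_fact_neq0 // mulr1 mul1r.
Qed.

Lemma chu_vandermonde N al g : poch g N != 0 ->
  \sum_(l < N.+1) poch (- N%:R : R) l * poch al l / (l`!%:R * poch g l)
  = poch (g - al) N / poch g N.
Proof.
move=> gN; rewrite -chu_vandermonde_poly mulr_suml; apply: eq_bigr => -[l] /=.
rewrite ltnS => lelN _; rewrite (poch_split g lelN).
have := poch_neq0_prefix lelN gN; have := poch_neq0_suffix lelN gN.
by move=> gl' gl; field; rewrite gl gl' natr_fact_neq0.
Qed.

Lemma poch_reflect_split u N r : (r <= N)%N ->
  (-1) ^+ r * poch (1 - u - N%:R) r * poch u (N - r) = poch u N.
Proof.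
move=> lerN; rewrite (_ : 1 - u - N%:R = 1 - (u + (N - r)%:R) - r%:R); last first.
  by rewrite natrB //; ring.
by rewrite poch_reflect mulrA -expr2 sqrr_sign mul1r mulrC -pochD subnK.
Qed.

Lemma pfaff_saalschutz_poly N al be g ep :
  ep = 1 + al + be - g - N%:R -> poch ep N != 0 ->
  \sum_(l < N.+1) poch (- N%:R : R) l * poch al l * poch be l * poch (g + l%:R) (N - l)
       / (l`!%:R * poch ep l) * poch ep N
  = (-1) ^+ N * poch (g - al) N * poch (g - be) N.
Proof.
move=> epE epN.
pose T l := poch (- N%:R) l * poch al l * poch (g + l%:R) (N - l) / l`!%:R * poch ep N.
pose U l r := poch (- l%:R) r * poch (ep - be) r / (r`!%:R * poch ep r).
(* Expand (be)_l / (ep)_l by Vandermonde, exchange the sums, and sum each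
   column by Vandermonde again. *)
have expand_be (l : 'I_N.+1) :
    poch (- N%:R) l * poch al l * poch be l * poch (g + l%:R) (N - l)
       / (l`!%:R * poch ep l) * poch ep N = \sum_(r < l.+1) T l * U l r.
  have epl : poch ep l != 0 by apply: poch_neq0_prefix epN; rewrite -ltnS.
  rewrite -big_distrr /= chu_vandermonde // (_ : ep - (ep - be) = be); last by ring.
  by rewrite /T; field; rewrite epl natr_fact_neq0.
have sum_column (r : 'I_N.+1) :
    \sum_(s < (N - r).+1) T (r + s)%N * U (r + s)%N r
    = poch (g - al) N * (poch (- N%:R) r * poch al r * poch (ep + r%:R) (N - r) / r`!%:R).
  have lerN : (r <= N)%N by rewrite -ltnS.
  have epr := poch_neq0_prefix lerN epN.
  have vdm := chu_vandermonde_poly (N - r) (al + r%:R) (g + r%:R).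
  rewrite (_ : g + r%:R - (al + r%:R) = g - al) in vdm; last by ring.
  rewrite -{1}(poch_reflect_split (g - al) lerN) -vdm big_distrr mulr_suml /=.
  apply: eq_bigr => -[s] /=.
  rewrite ltnS => lesN _; rewrite /T /U poch_opp_natD // poch_opp_nat_fact.
  rewrite (pochD al) (poch_split ep lerN) natrD subnDA addrA.
  rewrite (_ : ep - be = 1 - (g - al) - N%:R); last by rewrite epE; ring.
  by field; rewrite epr !natr_fact_neq0.
rewrite (eq_bigr _ (fun (l : 'I_N.+1) _ => expand_be l)).
rewrite (exchange_triangle (fun l r => T l * U l r)).
rewrite (eq_bigr _ (fun (r : 'I_N.+1) _ => sum_column r)) -big_distrr /= chu_vandermonde_poly.
rewrite (_ : ep - al = 1 - (g - be) - N%:R) ?poch_reflect; last by rewrite epE; ring.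
by ring.
Qed.

Lemma pfaff_saalschutz N al be g ep :
  ep = 1 + al + be - g - N%:R -> poch ep N != 0 -> poch g N != 0 ->
  \sum_(l < N.+1) poch (- N%:R : R) l * poch al l * poch be l / (l`!%:R * poch g l * poch ep l)
  = (-1) ^+ N * poch (g - al) N * poch (g - be) N / (poch g N * poch ep N).
Proof.
move=> epE epN gN; rewrite -(pfaff_saalschutz_poly epE epN) mulr_suml.
apply: eq_bigr => -[l] /=; rewrite ltnS => lelN _.
have := poch_neq0_prefix lelN gN; have := poch_neq0_suffix lelN gN.
have := poch_neq0_prefix lelN epN; rewrite (poch_split g lelN).
by move=> epl gl' gl; field; rewrite gl gl' epl epN natr_fact_neq0.
Qed.

Lemma not_nonpos_int_addn x i : not_nonpos_int x -> not_nonpos_int (x + i%:R).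
Proof.
by move=> xP j; apply: contra (xP (j + i)%N) => /eqP xiE; rewrite natrD opprD -xiE addrK.
Qed.

Lemma natr_bin_fact i l : 'C(i + l, i)%:R / (i + l)`!%:R = (i`!%:R * l`!%:R : R)^-1.
Proof.
have binC_neq0 : ('C(i + l, i)%:R : R) != 0 by rewrite pnatr_eq0 -lt0n bin_gt0 leq_addr.
by rewrite -(bin_fact (leq_addr l i)) addKn !natrM invfM mulrA divff ?mul1r.
Qed.

Lemma poch_subr_binomial x k j :
  poch (x - k%:R) j
  = \sum_(i < j.+1) 'C(j, i)%:R * poch (- k%:R) i * poch x (j - i).
Proof. by rewrite -poch_addr_binomial addrC. Qed.

Lemma poch_subr_ratio_binomial x d k j : poch d j != 0 ->
  poch (x - k%:R) j * poch (k%:R + d) j / poch d j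
  = \sum_(i < j.+1) 'C(j, i)%:R *
      (poch (- k%:R) i * poch (k%:R - x + d) i / poch d i) * poch x (j - i).
Proof.
move=> dj.
have dE : d = 1 + - k%:R + (k%:R - x + d) - (1 - x - j%:R) - j%:R by ring.
have := pfaff_saalschutz_poly dE dj.
rewrite (_ : 1 - x - j%:R - - k%:R = 1 - (x - k%:R) - j%:R); last by ring.
rewrite (_ : 1 - x - j%:R - (k%:R - x + d) = 1 - (k%:R + d) - j%:R); last by ring.
rewrite !poch_reflect => saal.
apply: (@mulfI _ ((-1) ^+ j * poch d j)); first by rewrite mulf_neq0 ?signr_eq0.
transitivity ((-1) ^+ j * ((-1) ^+ j * poch (x - k%:R) j) * ((-1) ^+ j * poch (k%:R + d) j)).
  transitivity ((-1) ^+ j ^+ 2 * ((-1) ^+ j * poch (x - k%:R) j * poch (k%:R + d) j)).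
    by rewrite sqrr_sign mul1r; field.
  by ring.
rewrite -saal big_distrr; apply: eq_bigr => -[l] /=; rewrite ltnS => lelj _.
rewrite poch_opp_nat // (_ : 1 - x - j%:R + l%:R = 1 - x - (j - l)%:R); last first.
  by rewrite natrB //; ring.
have signE : (-1) ^+ j = (-1) ^+ l * (-1) ^+ (j - l) :> R by rewrite -exprD subnKC.
rewrite poch_reflect signE.
have dl := poch_neq0_prefix lelj dj.
by field; rewrite dl natr_fact_neq0.
Qed.

Lemma poch_reflect_double u j m : (j <= m)%N ->
  (-1) ^+ j * poch (u - j%:R) (m - j) * poch (1 - u - m%:R) (j + j)
  = poch u m * poch (1 - u) j.
Proof.
move=> lejm.
rewrite (_ : 1 - u - m%:R = 1 - (u - j%:R + (m - j)%:R) - (j + j)%:R); last first.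
  by rewrite natrB // natrD; ring.
rewrite (_ : 1 - u = 1 - (u - j%:R) - j%:R) ?poch_reflect; last by ring.
rewrite exprD -expr2 sqrr_sign mul1r -mulrA -pochD.
rewrite (_ : (m - j + (j + j))%N = (j + m)%N) ?pochD; last by rewrite addnA subnK // addnC.
by rewrite (_ : u - j%:R + j%:R = u); [ring | ring].
Qed.

Lemma Q2_3E k n (a b c : R) :
  Q2_3 k n a b c = \sum_(i < n.+1) poch (- n%:R) i * poch (n%:R + a) i
    * poch (- k%:R) i / (i`!%:R * poch b i * poch c i).
Proof.
pose F i := poch (- n%:R) i * poch (n%:R + a) i * poch (- k%:R) i
  / (i`!%:R * poch b i * poch c i).
rewrite /Q2_3 (big_ord_eq_support (F := F) (M := n)) // => i /poch_opp_nat_eq0 ni.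
- by rewrite /F ni mulr0 mul0r.
- by rewrite /F ni !mul0r.
Qed.

Lemma Q2_4E k n (a b c d : R) :
  Q2_4 k n a b c d = \sum_(i < n.+1) poch (- n%:R) i * poch (n%:R + a) i
    * (poch (- k%:R) i * poch (k%:R - (1 + a - b - c) + d) i / poch d i)
    / (i`!%:R * poch b i * poch c i).
Proof.
pose F i := poch (- n%:R) i * poch (n%:R + a) i * poch (- k%:R) i
  * poch (k%:R - 1 - a + b + c + d) i / (i`!%:R * poch b i * poch c i * poch d i).
rewrite /Q2_4 (big_ord_eq_support (F := F) (M := n))
  => [|i /poch_opp_nat_eq0 ni|i /poch_opp_nat_eq0 ni].
- apply: eq_bigr => i _.
  rewrite /F (_ : k%:R - 1 - a + b + c + d = k%:R - (1 + a - b - c) + d); last by ring.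
  by rewrite !invfM; ring.
- by rewrite /F ni mulr0 !mul0r.
- by rewrite /F ni !mul0r.
Qed.

Section Transformation.
Variables (a b c w : R) (m : nat).
Hypotheses (hb : not_nonpos_int b) (hc : not_nonpos_int c) (hw : not_nonpos_int w)
  (hwa : not_nonpos_int (w - a))
  (hab : not_nonpos_int (1 + a - b)) (hac : not_nonpos_int (1 + a - c))
  (h1 : not_nonpos_int (2^-1 + 2^-1 * (a - w - m%:R)))
  (h2 : not_nonpos_int (1 + 2^-1 * (a - w - m%:R))).

Definition quadratic_coef j : R :=
  poch (a / 2) j * poch (2^-1 + a / 2) j * poch (1 + a - w) j * poch (- m%:R) j
  / (j`!%:R * poch (2^-1 + 2^-1 * (a - w - m%:R)) j
     * poch (1 + 2^-1 * (a - w - m%:R)) j).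

Lemma double_sum_vandermonde (Z : nat -> R) :
  \sum_(n < m.+1) poch a n * poch (- m%:R) n / (n`!%:R * poch w n) *
      \sum_(j < n.+1) poch (- n%:R) j * poch (n%:R + a) j * Z j / j`!%:R
  = \sum_(j < m.+1) (-1) ^+ j * poch a (j + j) * poch (w - a - j%:R) (m - j)
      * (poch (- m%:R) j * Z j / (j`!%:R * poch w m)).
Proof.
pose G n j := poch a n * poch (- m%:R) n / (n`!%:R * poch w n) *
  (poch (- n%:R) j * poch (n%:R + a) j * Z j / j`!%:R).
rewrite (eq_bigr (fun n : 'I_m.+1 => \sum_(j < n.+1) G n j)); last first.
  by move=> n _; rewrite big_distrr.
rewrite (exchange_triangle G); apply: eq_bigr => -[j] /=; rewrite ltnS => lejm _.
pose C := (-1) ^+ j * poch a (j + j) * poch (- m%:R) j * Z j / (j`!%:R * poch w j).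
have column_term (l : 'I_(m - j).+1) : G (j + l)%N j =
    C * (poch (- (m - j)%:R) l * poch (a + (j + j)%:R) l / (l`!%:R * poch (w + j%:R) l)).
  have wjl : poch (w + j%:R) l != 0 by apply/poch_neq0/not_nonpos_int_addn.
  have aE : poch a (j + l) * poch ((j + l)%:R + a) j
      = poch a (j + j) * poch (a + (j + j)%:R) l.
    by rewrite addrC -!pochD addnAC.
  rewrite /G /C poch_opp_natD // (pochD w).
  transitivity (poch a (j + l) * poch ((j + l)%:R + a) j * poch (- (j + l)%:R) j
    * poch (- m%:R) j * poch (- (m - j)%:R) l * Z j
    / ((j + l)`!%:R * j`!%:R * poch w j * poch (w + j%:R) l)).
    by rewrite !invfM; ring.
  rewrite aE poch_opp_nat_fact.
  by field; rewrite wjl poch_neq0 // !natr_fact_neq0.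
rewrite (eq_bigr _ (fun (l : 'I_(m - j).+1) _ => column_term l)) -big_distrr /=.
have wjm : poch (w + j%:R) (m - j) != 0 by apply/poch_neq0/not_nonpos_int_addn.
rewrite chu_vandermonde // (_ : w + j%:R - _ = w - a - j%:R); last by rewrite natrD; ring.
by rewrite /C (poch_split w lejm); field; rewrite wjm poch_neq0 // natr_fact_neq0.
Qed.

Lemma poch_quadratic_coef j : (j <= m)%N ->
  (-1) ^+ j * poch a (j + j) * poch (w - a - j%:R) (m - j)
  = poch (w - a) m * (poch (a / 2) j * poch (2^-1 + a / 2) j * poch (1 + a - w) j
     / (poch (2^-1 + 2^-1 * (a - w - m%:R)) j * poch (1 + 2^-1 * (a - w - m%:R)) j)).
Proof.
move=> lejm; have := poch_reflect_double (w - a) lejm.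
have two_neq0 : (2 : R) != 0 by rewrite pnatr_eq0.
rewrite !poch_double (_ : (1 - (w - a) - m%:R) / 2 = 2^-1 + 2^-1 * (a - w - m%:R));
  last by field.
rewrite (_ : 2^-1 + (2^-1 + _) = 1 + 2^-1 * (a - w - m%:R)); last by field.
rewrite (_ : 1 - (w - a) = 1 + a - w) => [refl|]; last by ring.
have l1 := poch_neq0 j h1; have l2 := poch_neq0 j h2.
rewrite [RHS](_ : _ = poch (w - a) m * poch (1 + a - w) j * (poch (a / 2) j
  * poch (2^-1 + a / 2) j / (poch (2^-1 + 2^-1 * (a - w - m%:R)) j
  * poch (1 + 2^-1 * (a - w - m%:R)) j))); last by rewrite !invfM; ring.
by rewrite -refl; field; rewrite l1 l2.
Qed.

Lemma saalschutz_balanced_tail n i : (i <= n)%N ->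
  \sum_(l < (n - i).+1) poch (- (n - i)%:R) l * poch (n%:R + a + i%:R) l
      * poch (1 + a - b - c) l
      / (l`!%:R * poch (1 + a - b + i%:R) l * poch (1 + a - c + i%:R) l)
  = poch (b + i%:R) (n - i) * poch (c + i%:R) (n - i)
    / (poch (1 + a - b + i%:R) (n - i) * poch (1 + a - c + i%:R) (n - i)).
Proof.
move=> lein.
have epE : 1 + a - c + i%:R = 1 + (n%:R + a + i%:R) + (1 + a - b - c)
    - (1 + a - b + i%:R) - (n - i)%:R by rewrite natrB //; ring.
rewrite (pfaff_saalschutz epE); try by apply/poch_neq0/not_nonpos_int_addn.
rewrite (_ : 1 + a - b + i%:R - (n%:R + a + i%:R) = 1 - (b + i%:R) - (n - i)%:R).
  rewrite (_ : 1 + a - b + i%:R - (1 + a - b - c) = c + i%:R) ?poch_reflect; last by ring.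
  by rewrite mulrA -expr2 sqrr_sign mul1r.
by rewrite natrB //; ring.
Qed.

Lemma inner_sum_saalschutz n (Y : nat -> R) :
  \sum_(j < n.+1) poch (- n%:R) j * poch (n%:R + a) j *
     (\sum_(i < j.+1) 'C(j, i)%:R * Y i * poch (1 + a - b - c) (j - i))
     / (j`!%:R * poch (1 + a - b) j * poch (1 + a - c) j)
  = poch b n * poch c n / (poch (1 + a - b) n * poch (1 + a - c) n) *
    \sum_(i < n.+1) poch (- n%:R) i * poch (n%:R + a) i * Y i
        / (i`!%:R * poch b i * poch c i).
Proof.
pose H j i := poch (- n%:R) j * poch (n%:R + a) j *
  ('C(j, i)%:R * Y i * poch (1 + a - b - c) (j - i))
  / (j`!%:R * poch (1 + a - b) j * poch (1 + a - c) j).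
rewrite (eq_bigr (fun j : 'I_n.+1 => \sum_(i < j.+1) H j i)); last first.
  by move=> j _; rewrite /H big_distrr big_distrl.
rewrite (exchange_triangle H) big_distrr /=; apply: eq_bigr => -[i] /=.
rewrite ltnS => lein _.
pose K := poch (- n%:R) i * poch (n%:R + a) i * Y i
  / (i`!%:R * poch (1 + a - b) i * poch (1 + a - c) i).
have column_term (l : 'I_(n - i).+1) : H (i + l)%N i =
    K * (poch (- (n - i)%:R) l * poch (n%:R + a + i%:R) l * poch (1 + a - b - c) l
      / (l`!%:R * poch (1 + a - b + i%:R) l * poch (1 + a - c + i%:R) l)).
  rewrite /H /K addKn.
  transitivity ('C(i + l, i)%:R / (i + l)`!%:R * poch (- n%:R) (i + l)
      * poch (n%:R + a) (i + l) * Y i * poch (1 + a - b - c) l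
      / (poch (1 + a - b) (i + l) * poch (1 + a - c) (i + l))).
    by rewrite !invfM; ring.
  by rewrite natr_bin_fact poch_opp_natD // !pochD !invfM; ring.
rewrite (eq_bigr _ (fun (l : 'I_(n - i).+1) _ => column_term l)) -big_distrr /=.
rewrite saalschutz_balanced_tail // /K (poch_split b lein) (poch_split c lein).
rewrite (poch_split (1 + a - b) lein) (poch_split (1 + a - c) lein).
have [bi ci] := (poch_neq0 i hb, poch_neq0 i hc).
have [abi aci] := (poch_neq0 i hab, poch_neq0 i hac).
have abn := poch_neq0 (n - i) (not_nonpos_int_addn i hab).
have acn := poch_neq0 (n - i) (not_nonpos_int_addn i hac).
by field; rewrite bi ci abi aci abn acn natr_fact_neq0.
Qed.

Lemma hypergeometric_transformation (Y : nat -> R) :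
  \sum_(j < m.+1) quadratic_coef j *
      ((\sum_(i < j.+1) 'C(j, i)%:R * Y i * poch (1 + a - b - c) (j - i))
        / (poch (1 + a - b) j * poch (1 + a - c) j))
  = poch w m / poch (w - a) m *
    \sum_(n < m.+1) poch a n * poch b n * poch c n * poch (- m%:R) n
        / (n`!%:R * poch (1 + a - b) n * poch (1 + a - c) n * poch w n)
        * \sum_(i < n.+1) poch (- n%:R) i * poch (n%:R + a) i * Y i
            / (i`!%:R * poch b i * poch c i).
Proof.
pose Z j := (\sum_(i < j.+1) 'C(j, i)%:R * Y i * poch (1 + a - b - c) (j - i))
  / (poch (1 + a - b) j * poch (1 + a - c) j).
have outer_term (n : 'I_m.+1) :
    poch a n * poch b n * poch c n * poch (- m%:R) n
      / (n`!%:R * poch (1 + a - b) n * poch (1 + a - c) n * poch w n)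
      * \sum_(i < n.+1) poch (- n%:R) i * poch (n%:R + a) i * Y i
          / (i`!%:R * poch b i * poch c i)
    = poch a n * poch (- m%:R) n / (n`!%:R * poch w n) *
      \sum_(j < n.+1) poch (- n%:R) j * poch (n%:R + a) j * Z j / j`!%:R.
  rewrite [in RHS](eq_bigr (fun j : 'I_n.+1 => poch (- n%:R) j * poch (n%:R + a) j
    * (\sum_(i < j.+1) 'C(j, i)%:R * Y i * poch (1 + a - b - c) (j - i))
    / (j`!%:R * poch (1 + a - b) j * poch (1 + a - c) j))); last first.
    by move=> j _; rewrite /Z !invfM; ring.
  by rewrite inner_sum_saalschutz !invfM; ring.
rewrite (eq_bigr _ (fun (n : 'I_m.+1) _ => outer_term n)) double_sum_vandermonde.
rewrite big_distrr; apply: eq_bigr => -[j] /=; rewrite ltnS => lejm _.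
rewrite poch_quadratic_coef // /quadratic_coef.
have [wm wam] := (poch_neq0 m hw, poch_neq0 m hwa).
have [l1 l2] := (poch_neq0 j h1, poch_neq0 j h2).
by rewrite -/(Z j); field; rewrite wm wam l1 l2 natr_fact_neq0.
Qed.

End Transformation.

End Hypergeometric.

Theorem theorem11 (R : numClosedFieldType) (k m : nat) (a b c d w : R)
  (hb : not_nonpos_int b) (hc : not_nonpos_int c) (hd : not_nonpos_int d)
  (hw : not_nonpos_int w) (hwa : not_nonpos_int (w - a))
  (hab : not_nonpos_int (1 + a - b)) (hac : not_nonpos_int (1 + a - c))
  (h1 : not_nonpos_int (2^-1 + 2^-1 * (a - w - m%:R)))
  (h2 : not_nonpos_int (1 + 2^-1 * (a - w - m%:R))) :
  hypF1 [:: a / 2; 2^-1 + a / 2; 1 - k%:R + a - b - c; 1 + a - w; - m%:R]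
        [:: 1 + a - b; 1 + a - c; 2^-1 + 2^-1 * (a - w - m%:R);
            1 + 2^-1 * (a - w - m%:R)] m
  = poch w m / poch (w - a) m *
    \sum_(n < m.+1)
      poch a n * poch b n * poch c n * poch (- m%:R) n
        / ((n`!)%:R * poch (1 + a - b) n * poch (1 + a - c) n * poch w n)
        * Q2_3 k n a b c
  /\
  hypF1 [:: a / 2; 2^-1 + a / 2; 1 - k%:R + a - b - c; k%:R + d; 1 + a - w;
            - m%:R]
        [:: 1 + a - b; 1 + a - c; d; 2^-1 + 2^-1 * (a - w - m%:R);
            1 + 2^-1 * (a - w - m%:R)] m
  = poch w m / poch (w - a) m *
    \sum_(n < m.+1)
      poch a n * poch b n * poch c n * poch (- m%:R) n
        / ((n`!)%:R * poch (1 + a - b) n * poch (1 + a - c) n * poch w n)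
        * Q2_4 k n a b c d.
Proof.
have transformation := hypergeometric_transformation hb hc hw hwa hab hac h1 h2.
have shiftE : 1 - k%:R + a - b - c = 1 + a - b - c - k%:R by ring.
split.
- transitivity (\sum_(j < m.+1) quadratic_coef a w m j *
      (poch (1 + a - b - c - k%:R) j / (poch (1 + a - b) j * poch (1 + a - c) j))).
    by apply: eq_bigr => j _; rewrite !big_cons big_nil shiftE /quadratic_coef !invfM invr1; ring.
  under eq_bigr do rewrite poch_subr_binomial.
  rewrite (transformation (fun i => poch (- k%:R) i)); congr (_ * _).
  by apply: eq_bigr => n _; rewrite Q2_3E.
- transitivity (\sum_(j < m.+1) quadratic_coef a w m j *
      (poch (1 + a - b - c - k%:R) j * poch (k%:R + d) j / poch d j
        / (poch (1 + a - b) j * poch (1 + a - c) j))).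
    by apply: eq_bigr => j _; rewrite !big_cons big_nil shiftE /quadratic_coef !invfM invr1; ring.
  under eq_bigr do rewrite poch_subr_ratio_binomial ?poch_neq0 //.
  rewrite (transformation (fun i => poch (- k%:R) i
    * poch (k%:R - (1 + a - b - c) + d) i / poch d i)); congr (_ * _).
  by apply: eq_bigr => n _; rewrite Q2_4E.
Qed.
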